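(* Let $T$ be a tournament and let $\sigma$ be any ordering of $V(T)$ in which the vertices appear in non-decreasing order of in-degree. Then $\Delta_\sigma(T)\le 3\,\Delta(T)$. Moreover, the factor $3$ is tight: there exist a tournament $T$ with $\Delta(T)\ge 1$ and an ordering $\sigma$ of $V(T)$ in non-decreasing order of in-degree with $\Delta_\sigma(T)=3\,\Delta(T)$.
   Context: A tournament is a digraph with exactly one arc between each pair of distinct vertices; $d^-(v)$ is the in-degree of $v$. For an ordering $\sigma=\langle v_1,\dots,v_n\rangle$ of $V(T)$, an arc $(v_i,v_j)$ is backward if $j<i$. $d_\sigma(v)$ is the number of backward arcs incident to $v$, $\Delta_\sigma(T)=\max_v d_\sigma(v)$, and the degreewidth is $\Delta(T)=\min_\sigma\Delta_\sigma(T)$ over all orderings $\sigma$. *)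

From mathcomp Require Import all_boot all_fingroup.
Set Implicit Arguments. Unset Strict Implicit. Unset Printing Implicit Defensive.

Definition tournament n (arc : rel 'I_n) : Prop :=
  (forall v, ~~ arc v v) /\
  (forall u v, u != v -> arc u v (+) arc v u).

Definition indeg n (arc : rel 'I_n) (v : 'I_n) : nat := #|[set u | arc u v]|.

(* An ordering sigma of V(T) is a permutation p : position of v is p v. *)
Definition backward n (arc : rel 'I_n) (p : {perm 'I_n}) (u w : 'I_n) : bool :=
  arc u w && (p w < p u).

Definition dsig n (arc : rel 'I_n) (p : {perm 'I_n}) (v : 'I_n) : nat :=
  #|[set u | backward arc p u v || backward arc p v u]|.

Definition Deltasig n (arc : rel 'I_n) (p : {perm 'I_n}) : nat :=
  \max_(v : 'I_n) dsig arc p v.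

Definition degreewidth n (arc : rel 'I_n) : nat :=
  Deltasig arc [arg min_(p < (1%g : {perm 'I_n})) Deltasig arc p].

Definition indeg_sorted n (arc : rel 'I_n) (p : {perm 'I_n}) : Prop :=
  forall u v : 'I_n, p u < p v -> indeg arc u <= indeg arc v.

From mathcomp Require Import all_boot all_fingroup zify.
Set Implicit Arguments. Unset Strict Implicit. Unset Printing Implicit Defensive.

(* In any ordering t, the position t w of a vertex differs from its in-degree
   by at most d_t(w): a vertex placed before w is an in-neighbour of w unless
   it spans a backward arc with w, and an in-neighbour placed after w spans
   one.  Fix t with Delta_t = k and a sorted ordering p.  If an arc between
   u and v is backward in p but not in t, sortedness gives d^-(u) >= d^-(v)
   (resp. <=), which pins t u into the window [d^-(v) - k, d^-(v) + k].  That
   window also contains t v, so it holds at most 2k vertices besides v; adding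
   the at most k arcs at v backward in t gives d_p(v) <= 3k. *)

Lemma card_ord_lt n m : m <= n -> #|[set i : 'I_n | i < m]| = m.
Proof.
move=> le_mn; have widen_inj : injective (widen_ord le_mn).
  by move=> i j [] /val_inj.
rewrite -[RHS]card_ord -(card_imset _ widen_inj).
apply: eq_card => i; rewrite inE.
apply/idP/imsetP=> [lt_im | [j _ ->]]; last exact: (ltn_ord j).
by exists (Ordinal lt_im) => //; apply: val_inj.
Qed.

Lemma card_le_window (T : finType) (f : T -> nat) (A : {set T}) lo hi :
  {in A &, injective f} -> {in A, forall x, lo <= f x < hi} -> #|A| <= hi - lo.
Proof.
move=> f_inj f_win; rewrite cardE -(size_map f) -(size_iota lo (hi - lo)).
apply: uniq_leq_size.
  by rewrite map_inj_in_uniq ?enum_uniq // => x y; rewrite !mem_enum; apply: f_inj.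
move=> _ /mapP[x xA ->]; rewrite mem_enum in xA.
by rewrite mem_iota; have := f_win x xA; lia.
Qed.

Lemma card_set_sum (T : finType) (P : pred T) : #|[set x | P x]| = \sum_x P x.
Proof. by rewrite -sum1dep_card big_mkcond; apply: eq_bigr => x _; case: (P x). Qed.

Section Orderings.

Variables (n : nat) (arc : rel 'I_n).

Lemma pos_eq (t : {perm 'I_n}) u v : (t u == t v :> nat) = (u == v).
Proof. by rewrite val_eqE (inj_eq perm_inj). Qed.

Lemma card_before (t : {perm 'I_n}) w : #|[set u | t u < t w]| = t w.
Proof.
have -> : [set u | t u < t w] = t @^-1: [set i : 'I_n | i < t w].
  by apply/setP=> u; rewrite !inE.
by rewrite card_preimset ?card_ord_lt //; [apply: ltnW | apply: perm_inj].
Qed.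

Lemma dsig_le_Deltasig (t : {perm 'I_n}) v : dsig arc t v <= Deltasig arc t.
Proof. exact: (leq_bigmax v). Qed.

Lemma degreewidth_le (t : {perm 'I_n}) : degreewidth arc <= Deltasig arc t.
Proof. by rewrite /degreewidth; case: arg_minnP => // s _; apply. Qed.

Lemma Deltasig_eq0_arc (t : {perm 'I_n}) u v :
  Deltasig arc t = 0 -> arc u v -> t u <= t v.
Proof.
move=> D0 a_uv; rewrite leqNgt; apply/negP => lt_vu.
have := dsig_le_Deltasig t v; rewrite D0 leqn0 cards_eq0 => /eqP/setP/(_ u).
by rewrite !inE /backward a_uv lt_vu.
Qed.

Hypothesis arcT : tournament arc.

Lemma arc_neq u v : arc u v -> u != v.
Proof. by case: arcT => irr _ a_uv; apply: contraTneq a_uv => ->; apply: irr. Qed.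

Lemma arc_asym u v : arc u v -> ~~ arc v u.
Proof. by case: arcT => _ tot a_uv; have := tot _ _ (arc_neq a_uv); rewrite a_uv. Qed.

Lemma arc_connex u v : u != v -> ~~ arc u v -> arc v u.
Proof. by case: arcT => _ tot /tot; case: (arc u v). Qed.

Lemma pos_le_indeg_dsig (t : {perm 'I_n}) w : t w <= indeg arc w + dsig arc t w.
Proof.
rewrite -card_before; apply: leq_trans (leq_card_setU _ _).
apply: subset_leq_card; apply/subsetP=> u; rewrite !inE /backward => lt_uw.
have neq_uw : u != w by apply: contraTneq lt_uw => ->; rewrite ltnn.
by case: (boolP (arc u w)) => //= /(arc_connex neq_uw) ->; rewrite lt_uw ?orbT.
Qed.

Lemma indeg_le_pos_dsig (t : {perm 'I_n}) w : indeg arc w <= t w + dsig arc t w.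
Proof.
rewrite -card_before; apply: leq_trans (leq_card_setU _ _).
apply: subset_leq_card; apply/subsetP=> u; rewrite !inE /backward => a_uw.
have := arc_neq a_uw; rewrite -(pos_eq t) a_uw /=.
by case: ltngtP.
Qed.

Lemma Deltasig_gt0_cycle (t : {perm 'I_n}) a b c :
  arc a b -> arc b c -> arc c a -> 0 < Deltasig arc t.
Proof.
move=> a_ab a_bc a_ca; rewrite lt0n; apply/eqP => D0.
have := arc_neq a_ab; rewrite -(pos_eq t).
have := Deltasig_eq0_arc D0 a_ab; have := Deltasig_eq0_arc D0 a_bc.
have := Deltasig_eq0_arc D0 a_ca; lia.
Qed.

Section SortedOrdering.

Variables (p t : {perm 'I_n}) (v : 'I_n).
Hypothesis p_sorted : indeg_sorted arc p.

Let k := Deltasig arc t.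
Let D := indeg arc v.

Lemma indeg_pos_close w : indeg arc w <= t w + k /\ t w <= indeg arc w + k.
Proof.
have := dsig_le_Deltasig t w; have := pos_le_indeg_dsig t w.
have := indeg_le_pos_dsig t w; rewrite -/k; lia.
Qed.

Let W := [set u | D - k <= t u <= D + k].

Lemma card_window_setD1 : #|W :\ v| <= 2 * k.
Proof.
have v_W : v \in W by rewrite inE; have := indeg_pos_close v; rewrite -/D; lia.
have pos_inj : {in W &, injective (fun u => nat_of_ord (t u))}.
  by move=> x y _ _ /val_inj/perm_inj.
have pos_W : {in W, forall u, D - k <= t u < (D + k).+1}.
  by move=> u; rewrite inE ltnS.
have := card_le_window pos_inj pos_W; rewrite (cardsD1 v W) v_W add1n.
by set c := #|W :\ v|; lia.
Qed.

Lemma backward_sorted_sub :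
  [set u | backward arc p u v || backward arc p v u] \subset
  [set u | backward arc t u v || backward arc t v u] :|: (W :\ v).
Proof.
apply/subsetP=> u; rewrite !inE /backward -(pos_eq t u v).
have [close_u close_v] := (indeg_pos_close u, indeg_pos_close v).
case/orP=> [/andP[a_uv lt_vu] | /andP[a_vu lt_uv]].
- have := p_sorted lt_vu; have := arc_neq a_uv; rewrite -(pos_eq t u v).
  rewrite a_uv (negbTE (arc_asym a_uv)) /= /D; lia.
- have := p_sorted lt_uv; have := arc_neq a_vu; rewrite eq_sym -(pos_eq t u v).
  rewrite a_vu (negbTE (arc_asym a_vu)) /= /D; lia.
Qed.

Lemma dsig_sorted_le : dsig arc p v <= 3 * k.
Proof.
apply: leq_trans (subset_leq_card backward_sorted_sub) _.
apply: leq_trans (leq_card_setU _ _) _.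
by rewrite mulSn leq_add ?card_window_setD1 ?dsig_le_Deltasig.
Qed.

End SortedOrdering.

Lemma Deltasig_sorted_le (p t : {perm 'I_n}) :
  indeg_sorted arc p -> Deltasig arc p <= 3 * Deltasig arc t.
Proof. by move=> p_sorted; apply/bigmax_leqP => v _; apply: dsig_sorted_le. Qed.

End Orderings.

(* The identity ordering is sorted (in-degrees 1,2,2,2,3) and has the three
   backward arcs 3->1, 3->2 and 4->3 at vertex 3.  The ordering 0,3,1,2,4 has
   only the disjoint backward arcs 2->0 and 4->3, and the triangle 0->1->2->0
   rules out degreewidth 0. *)
Definition ex_arc : rel 'I_5 := fun u v =>
  (val u, val v) \in
  [:: (0, 1); (0, 3); (0, 4); (1, 2); (1, 4); (2, 0); (2, 4); (3, 1); (3, 2); (4, 3)].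

Definition ex_pos (v : 'I_5) : 'I_5 := inord (nth 0 [:: 0; 2; 3; 1; 4] v).

Lemma ex_posE v : ex_pos v = nth 0 [:: 0; 2; 3; 1; 4] v :> nat.
Proof. by rewrite inordK //; case: v => [[|[|[|[|[|?]]]]] ?]. Qed.

Lemma ex_pos_inj : injective ex_pos.
Proof.
move=> u v /(congr1 (@nat_of_ord 5)); rewrite !ex_posE => eq_uv.
apply: val_inj; move: eq_uv.
by case: u => [[|[|[|[|[|?]]]]] ?]; case: v => [[|[|[|[|[|?]]]]] ?].
Qed.

Definition ex_order : {perm 'I_5} := perm ex_pos_inj.

Lemma ex_tournament : tournament ex_arc.
Proof.
split=> [|u v]; first by case=> [[|[|[|[|[|?]]]]] ?].
by case: u => [[|[|[|[|[|?]]]]] ?]; case: v => [[|[|[|[|[|?]]]]] ?].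
Qed.

Lemma ex_indeg_sorted : indeg_sorted ex_arc 1.
Proof.
move=> u v; rewrite !perm1 /indeg !card_set_sum !big_ord_recl !big_ord0.
by case: u => [[|[|[|[|[|?]]]]] ?]; case: v => [[|[|[|[|[|?]]]]] ?].
Qed.

Lemma ex_Deltasig_id : Deltasig ex_arc 1 = 3.
Proof.
rewrite /Deltasig /dsig /backward.
under eq_bigr => v _ do rewrite card_set_sum !big_ord_recl big_ord0 !perm1.
by rewrite !big_ord_recl big_ord0.
Qed.

Lemma ex_Deltasig_order : Deltasig ex_arc ex_order = 1.
Proof.
rewrite /Deltasig /dsig /backward.
under eq_bigr => v _ do rewrite card_set_sum !big_ord_recl big_ord0 !permE !ex_posE.
by rewrite !big_ord_recl big_ord0.
Qed.

Lemma ex_degreewidth : degreewidth ex_arc = 1.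
Proof.
apply/anti_leq/andP; split.
  by rewrite -[X in _ <= X]ex_Deltasig_order degreewidth_le.
exact: (Deltasig_gt0_cycle ex_tournament _ (a := @Ordinal 5 0 isT)
          (b := @Ordinal 5 1 isT) (c := @Ordinal 5 2 isT) isT isT isT).
Qed.

Theorem mainTheorem3 :
  (forall (n : nat) (arc : rel 'I_n) (p : {perm 'I_n}),
      tournament arc -> indeg_sorted arc p ->
      Deltasig arc p <= 3 * degreewidth arc)
  /\
  (exists (n : nat) (arc : rel 'I_n) (p : {perm 'I_n}),
      [/\ tournament arc, 1 <= degreewidth arc, indeg_sorted arc p &
          Deltasig arc p = 3 * degreewidth arc]).
Proof.
split; first by move=> n arc p arcT; exact: Deltasig_sorted_le.
exists 5, ex_arc, 1%g; rewrite ex_degreewidth ex_Deltasig_id.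
split=> //; [exact: ex_tournament | exact: ex_indeg_sorted].
Qed.
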